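(* Let $x=\{x_i^t\}$ and $y=\{y_i^t\}$ be two arbitrary, possibly fractional, allocations and let $X_i^t=\sum_{\tau=1}^tx_i^\tau$. Then for every transaction $i$ and every horizon $T$, $$\sum_{t=1}^Tx_i^tv_i^t\ge\sum_{t=1}^TX_i^ty_i^tv_i^t.$$
   Context: Online block packing: $m$ resources with capacities $B_j>0$; transactions $i$ with arrival time $a_i\in\{1,2,\dots\}$, base value $v_i\ge0$, discount $\rho_i\in[0,1]$, demand $w_i\in\mathbb{R}_+^m$; $v_i^t:=v_i(1-\rho_i)^{t-a_i}$. A fractional allocation is $\{x_i^t\}$ with $x_i^t\in[0,1]$, $x_i^t=0$ for $t<a_i$, $\sum_tx_i^t\le1$, and $\sum_iw_{ij}x_i^t\le B_j$ for all $t,j$. *)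

From HB Require Import structures.
From mathcomp Require Import all_boot all_order all_algebra.
Set Implicit Arguments. Unset Strict Implicit. Unset Printing Implicit Defensive.
Import Order.TTheory GRing.Theory Num.Theory.
Local Open Scope ring_scope.

(* Discounted value v_i^t = v_i (1 - rho_i)^(t - a_i).  The exponent uses
   truncated nat subtraction; for t < a_i every allocation is 0 anyway. *)
Definition vt {R : realFieldType} {I : Type} (v rho : I -> R) (a : I -> nat)
  (i : I) (t : nat) : R :=
  v i * (1 - rho i) ^+ (t - a i).

(* Time steps are
   t = 1, 2, ...; the constraint sum_t x_i^t <= 1 over the infinite horizon
   is stated via all finite partial sums (terms are nonnegative). *)
Definition is_alloc {R : realFieldType} {I : finType} {m : nat}
  (B : 'I_m -> R) (w : I -> 'I_m -> R) (a : I -> nat)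
  (x : I -> nat -> R) : Prop :=
  [/\ (forall i t, 0 <= x i t <= 1),
      (forall i t, (t < a i)%N -> x i t = 0),
      (forall i T, \sum_(1 <= t < T.+1) x i t <= 1) &
      (forall t j, \sum_(i : I) w i j * x i t <= B j)].

Definition cumul {R : realFieldType} {I : Type} (x : I -> nat -> R)
  (i : I) (t : nat) : R :=
  \sum_(1 <= tau < t.+1) x i tau.

From HB Require Import structures.
From mathcomp Require Import all_boot all_order all_algebra.
Import Order.TTheory GRing.Theory Num.Theory.
Local Open Scope ring_scope.

(* Expanding X_i^t turns the left-hand side into the triangular double sum of
   x_i^s y_i^t v_i^t over s <= t.  The discounted value is nonincreasing in
   time, so v_i^t <= v_i^s there; after exchanging the order of summation each
   x_i^s v_i^s is multiplied by a tail sum of y_i, which is at most 1 because y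
   is an allocation. *)

Lemma exchange_big_nat_triangular (R : nmodType) (F : nat -> nat -> R) n :
  \sum_(1 <= t < n) \sum_(1 <= s < t.+1) F s t
    = \sum_(1 <= s < n) \sum_(s <= t < n) F s t.
Proof.
rewrite [LHS](eq_big_nat _ _ (fun t ht =>
  big_nat_widen _ _ _ _ (fun s => F s t) (proj2 (andP ht)))).
under eq_bigr do rewrite big_mkcond.
rewrite exchange_big_nat; apply: eq_big_nat => s /andP[s_ge1 _].
by rewrite (@big_nat_widenl _ _ _ s 1) // big_mkcond.
Qed.

Section DiscountedCumulativeBound.

Variables (R : realFieldType) (x y V : nat -> R).
Hypotheses (x_ge0 : forall t, 0 <= x t) (y_ge0 : forall t, 0 <= y t).
Hypothesis y_sum_le1 : forall T, \sum_(1 <= t < T.+1) y t <= 1.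
Hypothesis V_ge0 : forall t, 0 <= V t.
Hypothesis V_nonincreasing : {homo V : s t / (s <= t)%N >-> t <= s}.

Lemma tail_sum_le1 s T : (1 <= s)%N -> \sum_(s <= t < T.+1) y t <= 1.
Proof.
move=> s_ge1; apply: le_trans (y_sum_le1 T).
rewrite (@big_nat_widenl _ _ _ s 1) // [leRHS]big_mkcond big_mkcond /=.
by apply: ler_sum => t _; case: ifP.
Qed.

Lemma sum_cumul_mul_le T :
  \sum_(1 <= t < T.+1) (\sum_(1 <= s < t.+1) x s) * y t * V t
    <= \sum_(1 <= s < T.+1) x s * V s.
Proof.
under eq_bigr do rewrite !mulr_suml.
apply: (@le_trans _ _ (\sum_(1 <= t < T.+1) \sum_(1 <= s < t.+1) x s * V s * y t)).
  apply: ler_sum_nat => t _; apply: ler_sum_nat => s /andP[_ s_le_t].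
  rewrite mulrAC; apply: ler_wpM2r => //; apply: ler_wpM2l => //.
  exact: V_nonincreasing.
rewrite exchange_big_nat_triangular; apply: ler_sum_nat => s /andP[s_ge1 _].
rewrite -mulr_sumr -[leRHS]mulr1.
by apply: ler_wpM2l; [exact: mulr_ge0 | exact: tail_sum_le1].
Qed.

End DiscountedCumulativeBound.

Section DiscountedValue.

Variables (R : realFieldType) (I : Type) (v rho : I -> R) (a : I -> nat) (i : I).
Hypotheses (v_ge0 : 0 <= v i) (rho_ge0 : 0 <= rho i) (rho_le1 : rho i <= 1).

Lemma vt_ge0 t : 0 <= vt v rho a i t.
Proof. by rewrite mulr_ge0 // exprn_ge0 // subr_ge0. Qed.

Lemma vt_nonincreasing : {homo vt v rho a i : s t / (s <= t)%N >-> t <= s}.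
Proof.
move=> s t s_le_t; apply: ler_wpM2l => //.
apply: ler_wiXn2l; last exact: leq_sub2r.
  by rewrite subr_ge0.
by rewrite lerBlDr lerDl.
Qed.

End DiscountedValue.

Theorem lemma2 (R : realFieldType) (I : finType) (m : nat)
  (B : 'I_m -> R) (a : I -> nat) (v rho : I -> R) (w : I -> 'I_m -> R)
  (hB : forall j, 0 < B j)
  (ha : forall i, (1 <= a i)%N)
  (hv : forall i, 0 <= v i)
  (hrho : forall i, 0 <= rho i <= 1)
  (hw : forall i j, 0 <= w i j)
  (x y : I -> nat -> R)
  (hx : is_alloc B w a x) (hy : is_alloc B w a y) :
  forall (i : I) (T : nat),
    \sum_(1 <= t < T.+1) cumul x i t * y i t * vt v rho a i t
      <= \sum_(1 <= t < T.+1) x i t * vt v rho a i t.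
Proof.
move=> i T; have [x01 _ _ _] := hx; have [y01 _ y_le1 _] := hy.
have [rho_ge0 rho_le1] := andP (hrho i).
apply: sum_cumul_mul_le.
- by move=> t; case/andP: (x01 i t).
- by move=> t; case/andP: (y01 i t).
- exact: y_le1.
- exact: vt_ge0.
- exact: vt_nonincreasing.
Qed.
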